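(* (a) The cell $S_{z_1,z_1}$ is the disjoint union of exactly three $G$-orbits of points $(P,Pz_1,Pz_1n)$: $n=n(1,0,0)$, dimension $7$, stabilizer $\{d(a,a,1/a^2):a\in\mathbb{R}^\times\}$; $n=n(0,1,0)$, dimension $6$, stabilizer $\left\{\begin{pmatrix}a&0&0\\0&1/a^2&x\\0&0&a\end{pmatrix}:a\in\mathbb{R}^\times,x\in\mathbb{R}\right\}$; $n=n(0,0,0)$, dimension $5$, stabilizer $D\cdot\{n(0,0,x):x\in\mathbb{R}\}$. (b) The cell $S_{z_1,z_2}$ is the disjoint union of exactly two $G$-orbits of points $(P,Pz_1,Pz_2n)$: $n=n(0,1,0)$, dimension $7$, stabilizer $\{d(a,1/a^2,a):a\in\mathbb{R}^\times\}$; $n=n(0,0,0)$, dimension $6$, stabilizer $D$. (c) The cell $S_{z_1,s_1}$ is the disjoint union of exactly two $G$-orbits of points $(P,Pz_1,Ps_1n)$: $n=n(1,0,0)$, dimension $6$, stabilizer $\left\{\begin{pmatrix}a&0&0\\0&a&x\\0&0&1/a^2\end{pmatrix}:a\in\mathbb{R}^\times,x\in\mathbb{R}\right\}$; $n=n(0,0,0)$, dimension $5$, stabilizer $D\cdot\{n(0,0,x):x\in\mathbb{R}\}$. (d) The cell $S_{z_1,s_2}$ is a single $G$-orbit, that of $(P,Pz_1,Ps_2)$, of dimension $6$ with stabilizer $D$. (e) The cell $S_{z_1,1}$ is a single $G$-orbit, that of $(P,Pz_1,P)$, of dimension $5$ with stabilizer $D\cdot\{n(0,0,x):x\in\mathb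b{R}\}$.
   Context: $G=\mathrm{SL}_3(\mathbb{R})$, $P$ the upper triangular matrices in $G$, $D$ the diagonal matrices in $G$; $G$ acts on $X=(P\backslash G)^3$ by right multiplication in each coordinate. $n(x,y,z)=\begin{pmatrix}1&x&y\\0&1&z\\0&0&1\end{pmatrix}$, $d(a,b,c)=\operatorname{diag}(a,b,c)$. $1$ is the identity matrix, $s_1=\begin{pmatrix}0&1&0\\1&0&0\\0&0&-1\end{pmatrix}$, $s_2=\begin{pmatrix}-1&0&0\\0&0&1\\0&1&0\end{pmatrix}$, $z_1=\begin{pmatrix}0&-1&0\\0&0&-1\\1&0&0\end{pmatrix}$, $z_2=\begin{pmatrix}0&0&1\\-1&0&0\\0&-1&0\end{pmatrix}$. $S_{v,w}=\big(\{P\}\times P\backslash PvP\times P\backslash PwP\big)\cdot G$. The stabilizer of $(P,Pv,Pwn)$ is $P\cap v^{-1}Pv\cap (wn)^{-1}P(wn)$. *)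

From HB Require Import structures.
From mathcomp Require Import all_boot all_order all_algebra.
From mathcomp Require Import all_classical all_reals topology normedtype sequences.
Set Implicit Arguments. Unset Strict Implicit. Unset Printing Implicit Defensive.
Import Order.TTheory GRing.Theory Num.Theory.
Import numFieldNormedType.Exports.
Local Open Scope classical_set_scope.
Local Open Scope ring_scope.

Section Defs.
Variable R : realType.
Notation M := 'M[R]_3.

Definition mx3 (a11 a12 a13 a21 a22 a23 a31 a32 a33 : R) : M :=
  \matrix_(i < 3, j < 3)
    nth 0 (nth [::] [:: [:: a11; a12; a13]; [:: a21; a22; a23];
                        [:: a31; a32; a33]] i) j.

Definition inG (g : M) : Prop := \det g = 1.
Definition inP (p : M) : Prop :=
  inG p /\ forall i j : 'I_3, (j < i)%N -> p i j = 0.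
Definition inD (d : M) : Prop :=
  inG d /\ forall i j : 'I_3, i != j -> d i j = 0.

Definition nn (x y z : R) : M := mx3 1 x y 0 1 z 0 0 1.
Definition dd (a b c : R) : M := mx3 a 0 0 0 b 0 0 0 c.

Definition s1 : M := mx3 0 1 0 1 0 0 0 0 (-1).
Definition s2 : M := mx3 (-1) 0 0 0 0 1 0 1 0.
Definition z1 : M := mx3 0 (-1) 0 0 0 (-1) 1 0 0.
Definition z2 : M := mx3 0 0 1 (-1) 0 0 0 (-1) 0.

(* Right cosets P g (g in G): P g = P h  iff  h g^-1 in P. *)
Definition coset_eq (g h : M) : Prop :=
  inG g /\ inG h /\ inP (h *m invmx g).

(* A point of X = (P\G)^3 is represented by a triple of elements of G;
   two triples represent the same point iff the cosets agree. *)
Definition triple := (M * M * M)%type.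
Definition xeq (x y : triple) : Prop :=
  coset_eq x.1.1 y.1.1 /\ coset_eq x.1.2 y.1.2 /\ coset_eq x.2 y.2.

Definition act (x : triple) (g : M) : triple :=
  (x.1.1 *m g, x.1.2 *m g, x.2 *m g).

Definition pt (v w : M) : triple := (1%:M, v, w).

Definition Gorbit (x : triple) : set triple :=
  [set y | exists g, inG g /\ xeq y (act x g)].

Definition stab (x : triple) : set M :=
  [set g | inG g /\ xeq (act x g) x].

Definition inPvP (v a : M) : Prop :=
  exists p q, inP p /\ inP q /\ a = p *m v *m q.

(* the cell S_{v,w} = ({P} x P\PvP x P\PwP) . G *)
Definition cell (v w : M) : set triple :=
  [set y | exists a b g, inG a /\ inG b /\ inG g /\ inPvP v a /\ inPvP w b /\
                         xeq y (act (1%:M, a, b) g)].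

(* Tangent cone at 1 of a set H of matrices (for a closed subgroup of
   GL_3(R), this is its Lie algebra). *)
Definition lie (H : set M) : set M :=
  [set X | exists (u : nat -> M) (t : nat -> R),
     (forall k, H (u k)) /\ (forall k, 0 < t k) /\ t @ \oo --> (0 : R) /\
     forall i j : 'I_3,
       (fun k => (u k i j - (1%:M : M) i j) / t k) @ \oo --> X i j].

Definition set_dim (S : set M) (n : nat) : Prop :=
  (exists s : seq M, size s = n /\ free s /\ forall X, X \in s -> S X) /\
  (forall s : seq M, free s -> (forall X, X \in s -> S X) -> (size s <= n)%N).

(* the orbit of x has dimension d = dim G - dim Stab(x), dim G = 8 *)
Definition orbit_dim (x : triple) (d : nat) : Prop :=
  exists k, set_dim (lie (stab x)) k /\ (d + k = 8)%N.

End Defs.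

Arguments s1 {R}.
Arguments s2 {R}.
Arguments z1 {R}.
Arguments z2 {R}.

(* Every point of S_{z1,w} is a translate of (P, P z1, P w r) with r in P, and
   the stabilizer of (P, P z1) is B = P ∩ z1^-1 P z1 = D·{n(0,0,x)}.  So the
   G-orbits in the cell are the orbits of B acting on the cosets P w r by right
   multiplication.  An explicit row reduction by an element of B brings every
   P w r to one of the listed P w n, and no c in B relates two listed
   representatives, since w n' c (w n)^-1 in P would force a diagonal entry of
   c to vanish.  The stabilizer of (P, P z1, P u) is the set of c in B with
   u c u^-1 in P, read off entrywise.  Its tangent cone at 1 is spanned by the
   velocities of the torus curves a |-> diag(a^p, a^q, a^r) and of the curve
   s |-> n(0,0,s) lying in it, while the linear relations between the entries
   of its elements bound it from above; the orbit dimension is 8 minus its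
   dimension. *)
From HB Require Import structures.
From mathcomp Require Import all_boot all_order all_algebra.
From mathcomp Require Import all_classical all_reals topology normedtype sequences.
From mathcomp Require Import ring lra.
Import Order.TTheory GRing.Theory Num.Theory.
Import numFieldNormedType.Exports.
Set Implicit Arguments. Unset Strict Implicit. Unset Printing Implicit Defensive.
Local Open Scope classical_set_scope.
Local Open Scope ring_scope.

Ltac split_and := repeat match goal with |- _ /\ _ => split end.
Ltac mx3_entries := apply/matrixP => -[[|[|[|i]]] Hi] [[|[|[|j]]] Hj]; rewrite ?mxE //=.

Section Span.
Variables (K : fieldType) (V : vectType K).
Implicit Types (x y z : V).

Lemma free_seq2 x y : y != 0 -> (forall k, x != k *: y) -> free [:: x; y].
Proof.
move=> y0 xy; rewrite free_cons seq1_free y0 andbT span_seq1.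
by apply/vlineP => -[k /eqP]; rewrite (negbTE (xy k)).
Qed.

Lemma free_seq3 x y z : free [:: y; z] -> (forall k l, x != k *: y + l *: z) ->
  free [:: x; y; z].
Proof.
move=> yz xyz; rewrite free_cons yz andbT span_cons span_seq1.
apply/negP => /memv_addP [_ /vlineP [k ->] [_ /vlineP [l ->] e]].
by move: (xyz k l); rewrite e eqxx.
Qed.

Lemma memv_span1 x k : k *: x \in <<[:: x]>>%VS.
Proof. by rewrite memvZ // memv_span ?mem_head. Qed.

Lemma memv_span2 x y k l : k *: x + l *: y \in <<[:: x; y]>>%VS.
Proof. by rewrite memvD // memvZ // memv_span // !inE eqxx ?orbT. Qed.

Lemma memv_span3 x y z k l m : k *: x + l *: y + m *: z \in <<[:: x; y; z]>>%VS.
Proof. by rewrite !memvD // memvZ // memv_span // !inE eqxx ?orbT. Qed.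

End Span.

Section SL3.
Context {R : realType}.
Notation M := 'M[R]_3.

Lemma mx3_eta (A : M) :
  A = mx3 (A 0 0) (A 0 1) (A 0 2) (A 1 0) (A 1 1) (A 1 2) (A 2 0) (A 2 1) (A 2 2).
Proof. by mx3_entries; congr (A _ _); apply: val_inj. Qed.

Lemma mx3_inj (a11 a12 a13 a21 a22 a23 a31 a32 a33 : R)
    (b11 b12 b13 b21 b22 b23 b31 b32 b33 : R) :
  mx3 a11 a12 a13 a21 a22 a23 a31 a32 a33 = mx3 b11 b12 b13 b21 b22 b23 b31 b32 b33 ->
  a11 = b11 /\ a12 = b12 /\ a13 = b13 /\ a21 = b21 /\ a22 = b22 /\ a23 = b23 /\
  a31 = b31 /\ a32 = b32 /\ a33 = b33.
Proof.
move/matrixP=> e; have /[!mxE] /= := e 0 0; have /[!mxE] /= := e 0 1.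
have /[!mxE] /= := e 0 2; have /[!mxE] /= := e 1 0; have /[!mxE] /= := e 1 1.
have /[!mxE] /= := e 1 2; have /[!mxE] /= := e 2 0; have /[!mxE] /= := e 2 1.
by have /[!mxE] /= := e 2 2.
Qed.

Lemma mul_mx3 (a11 a12 a13 a21 a22 a23 a31 a32 a33 : R)
    (b11 b12 b13 b21 b22 b23 b31 b32 b33 : R) :
  mx3 a11 a12 a13 a21 a22 a23 a31 a32 a33 *m mx3 b11 b12 b13 b21 b22 b23 b31 b32 b33 =
  mx3 (a11*b11 + a12*b21 + a13*b31) (a11*b12 + a12*b22 + a13*b32) (a11*b13 + a12*b23 + a13*b33)
      (a21*b11 + a22*b21 + a23*b31) (a21*b12 + a22*b22 + a23*b32) (a21*b13 + a22*b23 + a23*b33)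
      (a31*b11 + a32*b21 + a33*b31) (a31*b12 + a32*b22 + a33*b32) (a31*b13 + a32*b23 + a33*b33).
Proof. by mx3_entries; rewrite !big_ord_recr big_ord0 /= !mxE /= add0r. Qed.

Lemma add_mx3 (a11 a12 a13 a21 a22 a23 a31 a32 a33 : R)
    (b11 b12 b13 b21 b22 b23 b31 b32 b33 : R) :
  mx3 a11 a12 a13 a21 a22 a23 a31 a32 a33 + mx3 b11 b12 b13 b21 b22 b23 b31 b32 b33 =
  mx3 (a11 + b11) (a12 + b12) (a13 + b13) (a21 + b21) (a22 + b22) (a23 + b23)
      (a31 + b31) (a32 + b32) (a33 + b33).
Proof. by mx3_entries. Qed.

Lemma scale_mx3 (k a11 a12 a13 a21 a22 a23 a31 a32 a33 : R) :
  k *: mx3 a11 a12 a13 a21 a22 a23 a31 a32 a33 =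
  mx3 (k * a11) (k * a12) (k * a13) (k * a21) (k * a22) (k * a23)
      (k * a31) (k * a32) (k * a33).
Proof. by mx3_entries. Qed.

Lemma mx3_1 : 1%:M = mx3 1 0 0 0 1 0 0 0 1 :> M.
Proof. by mx3_entries. Qed.

Lemma mx3_0 : 0 = mx3 0 0 0 0 0 0 0 0 0 :> M.
Proof. by mx3_entries. Qed.

Lemma det_mx3 (a11 a12 a13 a21 a22 a23 a31 a32 a33 : R) :
  \det (mx3 a11 a12 a13 a21 a22 a23 a31 a32 a33) =
  a11 * (a22 * a33 - a23 * a32) - a12 * (a21 * a33 - a23 * a31)
  + a13 * (a21 * a32 - a22 * a31).
Proof.
rewrite (expand_det_row _ 0) /cofactor !big_ord_recr !big_ord0 /=.
rewrite !(expand_det_row _ 0) /cofactor !big_ord_recr !big_ord0 /= !det_mx11 !mxE /=.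
ring.
Qed.

Lemma mul3_eq1_neq0 (a b c : R) : a * b * c = 1 -> [/\ a != 0, b != 0 & c != 0].
Proof.
move=> abc1; split; apply/eqP => x0; move: abc1.
all: by rewrite x0 ?(mul0r, mulr0) => /esym/eqP; rewrite oner_eq0.
Qed.

Lemma mul_inv2 (a c : R) : a * a * c = 1 -> c = a ^- 2.
Proof.
move=> aac; have [a0 _ _] := mul3_eq1_neq0 aac.
by apply: (@mulfI _ (a * a)); rewrite ?mulf_neq0 // aac; field.
Qed.

Implicit Types (g h p q u v w : M).

Lemma inP_mx3 (a11 a12 a13 a21 a22 a23 a31 a32 a33 : R) :
  inP (mx3 a11 a12 a13 a21 a22 a23 a31 a32 a33) <->
  a11 * a22 * a33 = 1 /\ a21 = 0 /\ a31 = 0 /\ a32 = 0.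
Proof.
rewrite /inP /inG det_mx3; split.
- move=> [det1 lower].
  have /[!mxE] /= e21 := lower 1 0 isT; have /[!mxE] /= e31 := lower 2 0 isT.
  have /[!mxE] /= e32 := lower 2 1 isT.
  by split=> //; rewrite -det1 e21 e31 e32; ring.
- move=> [det1 [e21 [e31 e32]]]; split; first by rewrite e21 e31 e32 -det1; ring.
  by move=> [[|[|[|i]]] Hi] [[|[|[|j]]] Hj] //= _; rewrite mxE.
Qed.

Lemma inD_mx3 (a11 a12 a13 a21 a22 a23 a31 a32 a33 : R) :
  inD (mx3 a11 a12 a13 a21 a22 a23 a31 a32 a33) <->
  a11 * a22 * a33 = 1 /\ a12 = 0 /\ a13 = 0 /\ a21 = 0 /\ a23 = 0 /\ a31 = 0 /\ a32 = 0.
Proof.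
rewrite /inD /inG det_mx3; split.
- move=> [det1 offdiag].
  have /[!mxE] /= e12 := offdiag 0 1 isT; have /[!mxE] /= e13 := offdiag 0 2 isT.
  have /[!mxE] /= e21 := offdiag 1 0 isT; have /[!mxE] /= e23 := offdiag 1 2 isT.
  have /[!mxE] /= e31 := offdiag 2 0 isT; have /[!mxE] /= e32 := offdiag 2 1 isT.
  by subst; split=> //; rewrite -det1; ring.
- move=> [det1 [-> [-> [-> [-> [-> ->]]]]]]; split; first by rewrite -det1; ring.
  by move=> [[|[|[|i]]] Hi] [[|[|[|j]]] Hj] //= _; rewrite mxE.
Qed.

Lemma inP_coords p : inP p ->
  exists a b c d e f, a * d * f = 1 /\ p = mx3 a b c 0 d e 0 0 f.
Proof.
rewrite [in inP p](mx3_eta p) inP_mx3 => -[adf1 [e21 [e31 e32]]].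
exists (p 0 0), (p 0 1), (p 0 2), (p 1 1), (p 1 2), (p 2 2); split=> //.
by rewrite [LHS]mx3_eta e21 e31 e32.
Qed.

Lemma inD_coords g :
  inD g <-> exists c1 c2 c3, c1 * c2 * c3 = 1 /\ g = mx3 c1 0 0 0 c2 0 0 0 c3.
Proof.
split=> [|[c1 [c2 [c3 [c123 ->]]]]]; last by rewrite inD_mx3.
rewrite {1}(mx3_eta g) inD_mx3 => -[c123 [e12 [e13 [e21 [e23 [e31 e32]]]]]].
exists (g 0 0), (g 1 1), (g 2 2); split=> //.
by rewrite [LHS]mx3_eta e12 e13 e21 e23 e31 e32.
Qed.

Lemma inP_inG p : inP p -> inG p.
Proof. by case. Qed.

Lemma inG_unitmx g : inG g -> g \in unitmx.
Proof. by rewrite /inG unitmxE => ->; apply: unitr1. Qed.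

Lemma inG_mul g h : inG g -> inG h -> inG (g *m h).
Proof. by rewrite /inG det_mulmx => -> ->; rewrite mulr1. Qed.

Lemma inG1 : inG (1%:M : M).
Proof. exact: det1. Qed.

Lemma inP1 : inP (1%:M : M).
Proof. by rewrite mx3_1 inP_mx3 !mulr1. Qed.

Lemma inP_mul p q : inP p -> inP q -> inP (p *m q).
Proof.
rewrite (mx3_eta p) (mx3_eta q) mul_mx3 !inP_mx3.
move=> [dp [-> [-> ->]]] [dq [-> [-> ->]]]; split; last by split; [ring | split; ring].
by rewrite -[RHS]mulr1 -{1}dp -dq; ring.
Qed.

(* For an upper triangular matrix of determinant 1 the inverse is the adjugate. *)
Lemma inP_inv p : inP p -> inP (invmx p).
Proof.
rewrite (mx3_eta p).
move: (p 0 0) (p 0 1) (p 0 2) (p 1 0) (p 1 1) (p 1 2) (p 2 0) (p 2 1) (p 2 2).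
move=> a b c ? d e ? ? f /[dup] /inP_mx3 [adf1 [-> [-> ->]]] /inP_inG /inG_unitmx Up.
set q := mx3 (d * f) (- (b * f)) (b * e - c * d) 0 (a * f) (- (a * e)) 0 0 (a * d).
have qp1 : q *m mx3 a b c 0 d e 0 0 f = 1%:M.
  by rewrite /q mul_mx3 mx3_1 -adf1; congr mx3; ring.
have -> : invmx (mx3 a b c 0 d e 0 0 f) = q.
  by rewrite -[RHS]mulmx1 -(mulmxV Up) mulmxA qp1 mul1mx.
rewrite /q inP_mx3; split=> //.
by rewrite -[RHS]mulr1 -{1}adf1 -adf1; ring.
Qed.

#[local] Hint Resolve inP1 inP_inG inG_mul inP_mul inP_inv : core.

Definition Pcoset g : set M := [set h | exists2 p, inP p & p *m g = h].

Lemma Pcoset_mull p g : inP p -> Pcoset g (p *m g).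
Proof. by exists p. Qed.

Lemma Pcoset_trans g h (k : M) : Pcoset g h -> Pcoset h k -> Pcoset g k.
Proof. by move=> [p Pp <-] [q Pq <-]; exists (q *m p); rewrite ?mulmxA; auto. Qed.

Lemma Pcoset_sym g h : Pcoset g h -> Pcoset h g.
Proof.
move=> [p Pp <-]; exists (invmx p); first exact: inP_inv.
by rewrite mulmxA mulVmx ?mul1mx //; apply/inG_unitmx/inP_inG.
Qed.

Lemma Pcoset_mulr g h (k : M) : Pcoset g h -> Pcoset (g *m k) (h *m k).
Proof. by move=> [p Pp <-]; exists p; rewrite ?mulmxA. Qed.

Lemma Pcoset_mulrK g h (k : M) : inG k -> Pcoset (g *m k) (h *m k) -> Pcoset g h.
Proof.
move=> /inG_unitmx Uk /(Pcoset_mulr (invmx k)).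
by rewrite -!mulmxA !mulmxV // !mulmx1.
Qed.

Lemma Pcoset1 g : Pcoset 1%:M g <-> inP g.
Proof. by split=> [[p Pp <-] | Pg]; [rewrite mulmx1 | exists g; rewrite ?mulmx1]. Qed.

Lemma Pcoset_inv u ui g : u *m ui = 1%:M -> Pcoset u g <-> inP (g *m ui).
Proof.
move=> uui; split=> [[p Pp <-] | Pg]; first by rewrite -mulmxA uui mulmx1.
by exists (g *m ui); rewrite // -mulmxA (mulmx1C uui) mulmx1.
Qed.

Lemma coset_eqE g h : coset_eq g h <-> [/\ inG g, inG h & Pcoset g h].
Proof.
rewrite /coset_eq; split=> [[Gg [Gh Ph]] | [Gg Gh [p Pp <-]]].
  by split=> //; exists (h *m invmx g); rewrite // mulmxKV // inG_unitmx.
by split=> //; split; [auto | rewrite mulmxK // inG_unitmx].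
Qed.

Lemma coset_eq_sym g h : coset_eq g h -> coset_eq h g.
Proof. by move=> /coset_eqE [Gg Gh /Pcoset_sym]; rewrite coset_eqE. Qed.

Lemma coset_eq_trans g h (k : M) : coset_eq g h -> coset_eq h k -> coset_eq g k.
Proof.
move=> /coset_eqE [Gg _ gh] /coset_eqE [_ Gk hk].
by apply/coset_eqE; split; last exact: Pcoset_trans gh hk.
Qed.

Lemma xeq_sym (x y : triple R) : xeq x y -> xeq y x.
Proof. by move=> [e1 [e2 e3]]; split; [|split]; apply: coset_eq_sym. Qed.

Lemma xeq_trans (x y z : triple R) : xeq x y -> xeq y z -> xeq x z.
Proof.
move=> [e1 [e2 e3]] [f1 [f2 f3]].
by split; [|split]; [apply: coset_eq_trans e1 f1 | apply: coset_eq_trans e2 f2 |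
  apply: coset_eq_trans e3 f3].
Qed.

Lemma Gorbit_sub_cell v w n : inG v -> inG w -> inP n ->
  Gorbit (pt v (w *m n)) `<=` cell v w.
Proof.
move=> Gv Gw Pn y [g [Gg yg]]; exists v, (w *m n), g.
split=> //; split; first by auto.
split=> //; split.
  by exists 1%:M, 1%:M; rewrite mul1mx mulmx1; split; [apply: inP1 | split; [apply: inP1 |]].
by split=> //; exists 1%:M, n; rewrite mul1mx; split; [apply: inP1 | split].
Qed.

Lemma cell_translate v w (y : triple R) : inG v -> inG w -> cell v w y ->
  exists r g, [/\ inP r, inG g & xeq y (act (pt v (w *m r)) g)].
Proof.
move=> Gv Gw [a [b [g [_ [_ [Gg [[p [q [Pp [Pq ->]]]] [[p1 [q1 [Pp1 [Pq1 ->]]]] yg]]]]]]]].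
have Uq := inG_unitmx (inP_inG Pq).
exists (q1 *m invmx q), (q *m g); split; auto.
apply: xeq_trans yg _; rewrite /act /pt /= !mul1mx -!mulmxA mulKmx //.
split; [|split]; apply/coset_eqE; split=> /=; auto.
- exact: Pcoset_mull.
- by apply/Pcoset_sym/Pcoset_mull.
- by apply/Pcoset_sym/Pcoset_mull.
Qed.

Lemma Gorbit_sub v u u' c : inG v -> inG u -> inG u' -> inP c ->
  Pcoset v (v *m c) -> Pcoset (u' *m c) u -> Gorbit (pt v u) `<=` Gorbit (pt v u').
Proof.
move=> Gv Gu Gu' Pc vc uc y [g [Gg yg]]; exists (c *m g); split; auto.
apply: xeq_trans yg _; rewrite /act /pt /= !mul1mx !mulmxA.
split; [|split]; apply/coset_eqE; split=> /=; auto.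
- exact: Pcoset_mull.
- exact: Pcoset_mulr.
- by apply/Pcoset_sym/Pcoset_mulr.
Qed.

Lemma cell_sub_Gorbits v w (N : set M) : inG v -> inG w -> (forall n, N n -> inG n) ->
  (forall r, inP r -> exists2 n, N n &
     exists2 c, inP c /\ Pcoset v (v *m c) & Pcoset (w *m n *m c) (w *m r)) ->
  cell v w `<=` [set y | exists2 n, N n & Gorbit (pt v (w *m n)) y].
Proof.
move=> Gv Gw GN cover y /cell_translate [] // r [g [Pr Gg yg]].
have [n Nn [c [Pc vc] wnc]] := cover r Pr.
exists n => //; apply: (Gorbit_sub Gv _ _ Pc vc wnc); auto.
by exists g.
Qed.

Lemma Gorbit_disjoint v u u' : inG v ->
  (forall c, inP c -> Pcoset v (v *m c) -> ~ Pcoset u (u' *m c)) ->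
  Gorbit (pt v u) `&` Gorbit (pt v u') = set0.
Proof.
move=> Gv sep; apply/seteqP; split=> // y [[g [Gg yg]] [g' [Gg' yg']]].
have [/coset_eqE [_ _ gg'] [/coset_eqE [_ _ vv'] /coset_eqE [_ _ uu']]] :=
  xeq_trans (xeq_sym yg) yg'.
move: gg' vv' uu'; rewrite /act /pt /= !mul1mx => -[c Pc <-]; rewrite !mulmxA.
by move=> /(Pcoset_mulrK Gg) vc /(Pcoset_mulrK Gg); apply: sep.
Qed.

Lemma stabE v u g : inG v -> inG u ->
  stab (pt v u) g <-> [/\ inP g, Pcoset v (v *m g) & Pcoset u (u *m g)].
Proof.
move=> Gv Gu; rewrite /stab /xeq /act /pt /= mul1mx; split.
  move=> [Gg [/coset_eqE [_ _ /Pcoset_sym /Pcoset1 Pg]]].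
  by move=> [/coset_eqE [_ _ /Pcoset_sym vg] /coset_eqE [_ _ /Pcoset_sym ug]].
move=> [Pg vg ug]; split; auto.
by split; [|split]; apply/coset_eqE; split; auto; apply/Pcoset_sym; rewrite ?Pcoset1.
Qed.

(** * The stabilizer of (P, P z1) *)

Lemma inG_z1 : inG (z1 : M). Proof. by rewrite /inG det_mx3; ring. Qed.
Lemma inG_z2 : inG (z2 : M). Proof. by rewrite /inG det_mx3; ring. Qed.
Lemma inG_s1 : inG (s1 : M). Proof. by rewrite /inG det_mx3; ring. Qed.
Lemma inG_s2 : inG (s2 : M). Proof. by rewrite /inG det_mx3; ring. Qed.
Lemma inP_nn (x y z : R) : inP (nn x y z). Proof. by rewrite inP_mx3 !mulr1. Qed.

Lemma inG_mul_nn w (x y z : R) : inG w -> inG (w *m nn x y z).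
Proof. by move=> Gw; apply: inG_mul => //; apply/inP_inG/inP_nn. Qed.

Lemma z1_mulV : z1 *m z2 = 1%:M :> M.
Proof. by rewrite mul_mx3 mx3_1; congr mx3; ring. Qed.
Lemma z2_mulV : z2 *m z1 = 1%:M :> M.
Proof. exact: mulmx1C z1_mulV. Qed.
Lemma s1_mulV : s1 *m s1 = 1%:M :> M.
Proof. by rewrite mul_mx3 mx3_1; congr mx3; ring. Qed.
Lemma s2_mulV : s2 *m s2 = 1%:M :> M.
Proof. by rewrite mul_mx3 mx3_1; congr mx3; ring. Qed.

Lemma mul_nn_mulV w wi (x y z : R) : w *m wi = 1%:M ->
  w *m nn x y z *m (nn (- x) (x * z - y) (- z) *m wi) = 1%:M.
Proof.
move=> wwi; rewrite mulmxA -(mulmxA w) (_ : nn x y z *m _ = 1%:M) ?mulmx1 //.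
by rewrite mul_mx3 mx3_1; congr mx3; ring.
Qed.

Definition DN : set M := [set g | exists d x, inD d /\ g = d *m nn 0 0 x].

Lemma DN_mx3 g :
  DN g <-> exists c1 c2 c3 x, c1 * c2 * c3 = 1 /\ g = mx3 c1 0 0 0 c2 x 0 0 c3.
Proof.
split=> [[d [x [Dd ->]]] | [c1 [c2 [c3 [x [c123 ->]]]]]].
  move: Dd; rewrite (mx3_eta d) inD_mx3 => -[d123 [-> [-> [-> [-> [-> ->]]]]]].
  exists (d 0 0), (d 1 1), (d 2 2), (d 1 1 * x); split=> //.
  by rewrite mul_mx3; congr mx3; ring.
have [_ c2_neq0 _] := mul3_eq1_neq0 c123.
exists (mx3 c1 0 0 0 c2 0 0 0 c3), (x / c2); split; first by rewrite inD_mx3.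
by rewrite mul_mx3; congr mx3; field.
Qed.

Lemma DN_coords (c1 c2 c3 x : R) : c1 * c2 * c3 = 1 -> DN (mx3 c1 0 0 0 c2 x 0 0 c3).
Proof. by move=> c123; apply/DN_mx3; exists c1, c2, c3, x. Qed.

Lemma inD_sub_DN : inD (R := R) `<=` DN.
Proof. by move=> _ /inD_coords [c1 [c2 [c3 [c123 ->]]]]; apply: DN_coords. Qed.

Lemma stab_Pz1 c : inP c /\ Pcoset z1 (z1 *m c) <-> DN c.
Proof.
rewrite (DN_mx3 c) (Pcoset_inv (z1 *m c) z1_mulV); split.
  rewrite (mx3_eta c) !mul_mx3 !inP_mx3 => -[[c123 [-> [-> ->]]] [_ [e31 [e32 e21]]]].
  exists (c 0 0), (c 1 1), (c 2 2), (c 1 2); split=> //; congr mx3; lra.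
move=> [c1 [c2 [c3 [x [c123 ->]]]]]; rewrite !mul_mx3 !inP_mx3.
by split; split_and; first [ring | rewrite -[X in _ = X]c123; ring].
Qed.

Lemma stab_z1_coords u ui g : inG u -> u *m ui = 1%:M ->
  stab (pt z1 u) g <-> exists c1 c2 c3 t, [/\ c1 * c2 * c3 = 1,
    g = mx3 c1 0 0 0 c2 t 0 0 c3 & inP (u *m mx3 c1 0 0 0 c2 t 0 0 c3 *m ui)].
Proof.
move=> Gu uui; rewrite (stabE _ inG_z1 Gu); split.
  move=> [Pg z1g /(Pcoset_inv _ uui)].
  have /DN_mx3 [c1 [c2 [c3 [t [c123 ->]]]]] : DN g by apply/stab_Pz1.
  by exists c1, c2, c3, t.
move=> [c1 [c2 [c3 [t [c123 -> ug]]]]].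
have /stab_Pz1 [Pg z1g] := DN_coords t c123.
by split=> //; apply/(Pcoset_inv _ uui).
Qed.

Lemma cell_z1E w (N : set M) : inG w -> (forall n, N n -> inP n) ->
  (forall r, inP r -> exists2 n, N n & exists2 c, DN c & Pcoset (w *m n *m c) (w *m r)) ->
  cell z1 w = [set y | exists2 n, N n & Gorbit (pt z1 (w *m n)) y].
Proof.
move=> Gw PN cover; apply/seteqP; split.
  apply: cell_sub_Gorbits => //; first exact: inG_z1.
    by move=> n /PN /inP_inG.
  by move=> r /cover [n Nn [c /stab_Pz1 ? ?]]; exists n => //; exists c.
by move=> y [n /PN Pn]; apply: Gorbit_sub_cell => //; apply: inG_z1.
Qed.

Lemma Gorbit_z1_disjoint w wi (x y z : R) u' : w *m wi = 1%:M ->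
  (forall c, DN c -> ~ inP (u' *m c *m (nn (- x) (x * z - y) (- z) *m wi))) ->
  Gorbit (pt z1 (w *m nn x y z)) `&` Gorbit (pt z1 u') = set0.
Proof.
move=> wwi sep; apply: Gorbit_disjoint; first exact: inG_z1.
move=> c Pc z1c /(Pcoset_inv _ (mul_nn_mulV x y z wwi)).
by apply: sep; apply/stab_Pz1.
Qed.

(** * Orbit representatives *)

Ltac neq0 := repeat (apply/andP; split); done.
Ltac mx3_normalize :=
  rewrite /z1 /z2 /s1 /s2 /nn ?mx3_1 ?mul_mx3 ?inP_mx3; split_and; try congr mx3.
Ltac mx3_field := mx3_normalize; field; neq0.
(* h : a * b * c = 1 closes the determinant condition of inP. *)
Ltac mx3_field_using h :=
  mx3_normalize; first [field | refine (etrans _ h); field]; neq0.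
Ltac contra_neq0 :=
  match goal with H : is_true (?c != 0) |- False => move/eqP: H; apply; lra end.

Lemma reduce_by w n r p (c1 c2 c3 x : R) : c1 * c2 * c3 = 1 -> inP p ->
  p *m (w *m n *m mx3 c1 0 0 0 c2 x 0 0 c3) = w *m r ->
  exists2 c, DN c & Pcoset (w *m n *m c) (w *m r).
Proof.
by move=> c123 Pp wr; exists (mx3 c1 0 0 0 c2 x 0 0 c3); [apply: DN_coords | exists p].
Qed.

Lemma z1_reduce r : inP r ->
  exists2 n, n = nn 1 0 0 \/ n = nn 0 1 0 \/ n = nn 0 0 0 &
  exists2 c, DN c & Pcoset (z1 *m n *m c) (z1 *m r).
Proof.
move=> /inP_coords [a [b [c [d [e [f [adf1 ->]]]]]]].
have [a0 d0 f0] := mul3_eq1_neq0 adf1.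
have [b0|b0] := eqVneq b 0; last first.
  exists (nn 1 0 0); first by left.
  apply: (reduce_by (c1 := a / b) (c2 := 1) (c3 := b / a) (x := c / b)
    (p := mx3 d ((e - d * c / b) * a / b) 0 0 (f * a / b) 0 0 0 b)); mx3_field_using adf1.
have [c0|c0] := eqVneq c 0; last first.
  exists (nn 0 1 0); first by right; left.
  apply: (reduce_by (c1 := a / c) (c2 := c / a) (c3 := 1) (x := 0)
    (p := mx3 (d * a / c) e 0 0 f 0 0 0 c)); subst; mx3_field_using adf1.
exists (nn 0 0 0); first by right; right.
apply: (reduce_by (c1 := 1) (c2 := 1) (c3 := 1) (x := 0)
  (p := mx3 d e 0 0 f 0 0 0 a)); subst; mx3_field_using adf1.
Qed.

Lemma z2_reduce r : inP r ->
  exists2 n, n = nn 0 1 0 \/ n = nn 0 0 0 &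
  exists2 c, DN c & Pcoset (z2 *m n *m c) (z2 *m r).
Proof.
move=> /inP_coords [a [b [c [d [e [f [adf1 ->]]]]]]].
have [a0 d0 f0] := mul3_eq1_neq0 adf1.
have [m ->] : exists m, c = m + b * e / d by exists (c - b * e / d); field.
have [m0|m0] := eqVneq m 0; last first.
  exists (nn 0 1 0); first by left.
  apply: (reduce_by (c1 := a / m) (c2 := m / a) (c3 := 1) (x := e * m / (a * d))
    (p := mx3 f 0 0 0 m (b * a / m) 0 0 (d * a / m))); mx3_field_using adf1.
exists (nn 0 0 0); first by right.
apply: (reduce_by (c1 := 1) (c2 := 1) (c3 := 1) (x := e / d)
  (p := mx3 f 0 0 0 a b 0 0 d)); subst; mx3_field_using adf1.
Qed.

Lemma s1_reduce r : inP r ->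
  exists2 n, n = nn 1 0 0 \/ n = nn 0 0 0 &
  exists2 c, DN c & Pcoset (s1 *m n *m c) (s1 *m r).
Proof.
move=> /inP_coords [a [b [c [d [e [f [adf1 ->]]]]]]].
have [a0 d0 f0] := mul3_eq1_neq0 adf1.
have [b0|b0] := eqVneq b 0; last first.
  exists (nn 1 0 0); first by left.
  apply: (reduce_by (c1 := a / b) (c2 := 1) (c3 := b / a) (x := 0)
    (p := mx3 d 0 (- (e * a / b)) 0 b (- (c * a / b)) 0 0 (f * a / b)));
    mx3_field_using adf1.
exists (nn 0 0 0); first by right.
apply: (reduce_by (c1 := 1) (c2 := 1) (c3 := 1) (x := 0)
  (p := mx3 d 0 (- e) 0 a (- c) 0 0 f)); subst; mx3_field_using adf1.
Qed.

Lemma s2_reduce r : inP r ->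
  exists2 n, n = 1%:M & exists2 c, DN c & Pcoset (s2 *m n *m c) (s2 *m r).
Proof.
move=> /inP_coords [a [b [c [d [e [f [adf1 ->]]]]]]].
have [a0 d0 f0] := mul3_eq1_neq0 adf1.
exists 1%:M => //.
apply: (reduce_by (c1 := 1) (c2 := 1) (c3 := 1) (x := e / d)
  (p := mx3 a (- (c - b * e / d)) (- b) 0 f 0 0 0 d)); mx3_field_using adf1.
Qed.

Lemma one_reduce r : inP r ->
  exists2 n, n = 1%:M & exists2 c, DN c & Pcoset (1%:M *m n *m c) (1%:M *m r).
Proof.
move=> Pr; exists 1%:M => //; exists 1%:M; last by exists r; rewrite ?mulmx1 ?mul1mx.
by rewrite mx3_1; apply: DN_coords; rewrite !mulr1.
Qed.

Ltac separate wwi :=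
  apply: (Gorbit_z1_disjoint wwi) => c /DN_mx3 [c1 [c2 [c3 [x [c123 ->]]]]];
  have [? ? ?] := mul3_eq1_neq0 c123;
  rewrite /z1 /z2 /s1 /nn !mul_mx3 inP_mx3 => -[_ [? [? ?]]]; contra_neq0.

Lemma z1_orbits_disjoint12 :
  Gorbit (pt z1 (z1 *m nn 1 0 0)) `&` Gorbit (pt z1 (z1 *m nn 0 1 0)) = set0
  :> set (triple R).
Proof. separate z1_mulV. Qed.

Lemma z1_orbits_disjoint13 :
  Gorbit (pt z1 (z1 *m nn 1 0 0)) `&` Gorbit (pt z1 (z1 *m nn 0 0 0)) = set0
  :> set (triple R).
Proof. separate z1_mulV. Qed.

Lemma z1_orbits_disjoint23 :
  Gorbit (pt z1 (z1 *m nn 0 1 0)) `&` Gorbit (pt z1 (z1 *m nn 0 0 0)) = set0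
  :> set (triple R).
Proof. separate z1_mulV. Qed.

Lemma z2_orbits_disjoint :
  Gorbit (pt z1 (z2 *m nn 0 1 0)) `&` Gorbit (pt z1 (z2 *m nn 0 0 0)) = set0
  :> set (triple R).
Proof. separate z2_mulV. Qed.

Lemma s1_orbits_disjoint :
  Gorbit (pt z1 (s1 *m nn 1 0 0)) `&` Gorbit (pt z1 (s1 *m nn 0 0 0)) = set0
  :> set (triple R).
Proof. separate s1_mulV. Qed.

Notation O w n := (Gorbit (pt z1 (w *m n)) : set (triple R)).

Lemma cell_z1_z1 : cell z1 z1 = O z1 (nn 1 0 0) `|` O z1 (nn 0 1 0) `|` O z1 (nn 0 0 0).
Proof.
rewrite (cell_z1E inG_z1 _ z1_reduce); last by move=> n [|[|]] ->; apply: inP_nn.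
apply/seteqP; split=> y; first by move=> [n [|[|]] -> Oy]; [left; left | left; right | right].
move=> [[Oy|Oy]|Oy]; [exists (nn 1 0 0) | exists (nn 0 1 0) | exists (nn 0 0 0)] => //.
- by left.
- by right; left.
- by right; right.
Qed.

Lemma cell_z1_z2 : cell z1 z2 = O z2 (nn 0 1 0) `|` O z2 (nn 0 0 0).
Proof.
rewrite (cell_z1E inG_z2 _ z2_reduce); last by move=> n [|] ->; apply: inP_nn.
apply/seteqP; split=> y; first by move=> [n [|] -> Oy]; [left | right].
by move=> [Oy|Oy]; [exists (nn 0 1 0); first left | exists (nn 0 0 0); first right].
Qed.

Lemma cell_z1_s1 : cell z1 s1 = O s1 (nn 1 0 0) `|` O s1 (nn 0 0 0).
Proof.
rewrite (cell_z1E inG_s1 _ s1_reduce); last by move=> n [|] ->; apply: inP_nn.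
apply/seteqP; split=> y; first by move=> [n [|] -> Oy]; [left | right].
by move=> [Oy|Oy]; [exists (nn 1 0 0); first left | exists (nn 0 0 0); first right].
Qed.

Lemma cell_z1_s2 : cell z1 s2 = Gorbit (pt z1 s2) :> set (triple R).
Proof.
rewrite (cell_z1E inG_s2 _ s2_reduce); last by move=> n ->; apply: inP1.
by apply/seteqP; split=> y; [move=> [n -> ]; rewrite mulmx1 | exists 1%:M; rewrite ?mulmx1].
Qed.

Lemma cell_z1_1 : cell z1 1%:M = Gorbit (pt z1 1%:M) :> set (triple R).
Proof.
rewrite (cell_z1E inG1 _ one_reduce); last by move=> n ->; apply: inP1.
by apply/seteqP; split=> y; [move=> [n -> ]; rewrite mulmx1 | exists 1%:M; rewrite ?mulmx1].
Qed.

(** * Stabilizers *)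

Lemma stab_z1_z1n100 :
  stab (pt z1 (z1 *m nn 1 0 0)) = [set g | exists a : R, a != 0 /\ g = dd a a (a ^- 2)].
Proof.
have stabE g := stab_z1_coords g (inG_mul_nn 1 0 0 inG_z1) (mul_nn_mulV 1 0 0 z1_mulV).
apply/seteqP; split=> g.
  move=> /stabE [c1 [c2 [c3 [t [c123 ->]]]]]; rewrite /z1 /z2 /nn !mul_mx3 inP_mx3.
  move=> -[_ [e21 [e31 e32]]]; have [c1_neq0 _ _] := mul3_eq1_neq0 c123.
  have c21 : c2 = c1 by lra.
  have t0 : t = 0 by lra.
  have c3E : c3 = c1 ^- 2 by apply: mul_inv2; move: c123; rewrite c21.
  by exists c1; split=> //; rewrite /dd c21 t0 c3E.
move=> [a [a0 ->]]; apply/stabE; exists a, a, (a ^- 2), 0; split=> //; first by field.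
mx3_field.
Qed.

Lemma stab_z1_z1n010 : stab (pt z1 (z1 *m nn 0 1 0)) =
  [set g | exists a x : R, a != 0 /\ g = mx3 a 0 0 0 (a ^- 2) x 0 0 a].
Proof.
have stabE g := stab_z1_coords g (inG_mul_nn 0 1 0 inG_z1) (mul_nn_mulV 0 1 0 z1_mulV).
apply/seteqP; split=> g.
  move=> /stabE [c1 [c2 [c3 [t [c123 ->]]]]]; rewrite /z1 /z2 /nn !mul_mx3 inP_mx3.
  move=> -[_ [e21 [e31 e32]]]; have [c1_neq0 _ _] := mul3_eq1_neq0 c123.
  have c31 : c3 = c1 by lra.
  have c2E : c2 = c1 ^- 2 by apply: mul_inv2; rewrite -c123 c31; ring.
  by exists c1, t; split=> //; rewrite c31 c2E.
move=> [a [x [a0 ->]]]; apply/stabE; exists a, (a ^- 2), a, x; split=> //; first by field.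
mx3_field.
Qed.

Lemma stab_z1_z1n000 : stab (pt z1 (z1 *m nn 0 0 0)) = DN.
Proof.
have stabE g := stab_z1_coords g (inG_mul_nn 0 0 0 inG_z1) (mul_nn_mulV 0 0 0 z1_mulV).
apply/seteqP; split=> g; first by move=> /stabE [c1 [c2 [c3 [t [c123 -> _]]]]]; apply: DN_coords.
move=> /DN_mx3 [c1 [c2 [c3 [t [c123 ->]]]]]; apply/stabE; exists c1, c2, c3, t.
by split=> //; mx3_field_using c123.
Qed.

Lemma stab_z1_z2n010 :
  stab (pt z1 (z2 *m nn 0 1 0)) = [set g | exists a : R, a != 0 /\ g = dd a (a ^- 2) a].
Proof.
have stabE g := stab_z1_coords g (inG_mul_nn 0 1 0 inG_z2) (mul_nn_mulV 0 1 0 z2_mulV).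
apply/seteqP; split=> g.
  move=> /stabE [c1 [c2 [c3 [t [c123 ->]]]]]; rewrite /z1 /z2 /nn !mul_mx3 inP_mx3.
  move=> -[_ [e21 [e31 e32]]]; have [c1_neq0 _ _] := mul3_eq1_neq0 c123.
  have c31 : c3 = c1 by lra.
  have t0 : t = 0 by lra.
  have c2E : c2 = c1 ^- 2 by apply: mul_inv2; rewrite -c123 c31; ring.
  by exists c1; split=> //; rewrite /dd c31 c2E t0.
move=> [a [a0 ->]]; apply/stabE; exists a, (a ^- 2), a, 0; split=> //; first by field.
mx3_field.
Qed.

Lemma stab_z1_z2n000 : stab (pt z1 (z2 *m nn 0 0 0)) = inD (R := R).
Proof.
have stabE g := stab_z1_coords g (inG_mul_nn 0 0 0 inG_z2) (mul_nn_mulV 0 0 0 z2_mulV).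
apply/seteqP; split=> g.
  move=> /stabE [c1 [c2 [c3 [t [c123 ->]]]]]; rewrite /z1 /z2 /nn !mul_mx3 inP_mx3.
  move=> -[_ [e21 [e31 e32]]]; have t0 : t = 0 by lra.
  by apply/inD_coords; exists c1, c2, c3; rewrite t0.
move=> /inD_coords [c1 [c2 [c3 [c123 ->]]]]; apply/stabE; exists c1, c2, c3, 0.
by split=> //; mx3_field_using c123.
Qed.

Lemma stab_z1_s1n100 : stab (pt z1 (s1 *m nn 1 0 0)) =
  [set g | exists a x : R, a != 0 /\ g = mx3 a 0 0 0 a x 0 0 (a ^- 2)].
Proof.
have stabE g := stab_z1_coords g (inG_mul_nn 1 0 0 inG_s1) (mul_nn_mulV 1 0 0 s1_mulV).
apply/seteqP; split=> g.
  move=> /stabE [c1 [c2 [c3 [t [c123 ->]]]]]; rewrite /s1 /nn !mul_mx3 inP_mx3.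
  move=> -[_ [e21 [e31 e32]]]; have [c1_neq0 _ _] := mul3_eq1_neq0 c123.
  have c21 : c2 = c1 by lra.
  have c3E : c3 = c1 ^- 2 by apply: mul_inv2; move: c123; rewrite c21.
  by exists c1, t; split=> //; rewrite c21 c3E.
move=> [a [x [a0 ->]]]; apply/stabE; exists a, a, (a ^- 2), x; split=> //; first by field.
mx3_field.
Qed.

Lemma stab_z1_s1n000 : stab (pt z1 (s1 *m nn 0 0 0)) = DN.
Proof.
have stabE g := stab_z1_coords g (inG_mul_nn 0 0 0 inG_s1) (mul_nn_mulV 0 0 0 s1_mulV).
apply/seteqP; split=> g; first by move=> /stabE [c1 [c2 [c3 [t [c123 -> _]]]]]; apply: DN_coords.
move=> /DN_mx3 [c1 [c2 [c3 [t [c123 ->]]]]]; apply/stabE; exists c1, c2, c3, t.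
by split=> //; mx3_field_using c123.
Qed.

Lemma stab_z1_s2 : stab (pt z1 s2) = inD (R := R).
Proof.
have stabE g := stab_z1_coords g inG_s2 s2_mulV.
apply/seteqP; split=> g.
  move=> /stabE [c1 [c2 [c3 [t [c123 ->]]]]]; rewrite /s2 !mul_mx3 inP_mx3.
  move=> -[_ [e21 [e31 e32]]]; have t0 : t = 0 by lra.
  by apply/inD_coords; exists c1, c2, c3; rewrite t0.
move=> /inD_coords [c1 [c2 [c3 [c123 ->]]]]; apply/stabE; exists c1, c2, c3, 0.
by split=> //; mx3_field_using c123.
Qed.

Lemma stab_z1_1 : stab (pt z1 1%:M) = DN.
Proof.
have stabE g := stab_z1_coords g inG1 (mulmx1 1%:M).
apply/seteqP; split=> g; first by move=> /stabE [c1 [c2 [c3 [t [c123 -> _]]]]]; apply: DN_coords.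
move=> /DN_mx3 [c1 [c2 [c3 [t [c123 ->]]]]]; apply/stabE; exists c1, c2, c3, t.
by split=> //; rewrite mul1mx mulmx1 inP_mx3.
Qed.

(** * Tangent cones *)

Section DifferenceQuotients.
Variable t : nat -> R.
Hypothesis t_gt0 : forall k, 0 < t k.
Hypothesis t_cvg0 : t @ \oo --> 0.

Let t_neq0 k : t k != 0. Proof. by rewrite gt_eqF. Qed.

Let cvg_1Dt : (fun k => 1 + t k) @ \oo --> (1 : R).
Proof. by rewrite -[X in _ --> X]addr0; apply: cvgD => //; apply: cvg_cst. Qed.

Lemma diffquot_exprn n : (fun k => ((1 + t k) ^+ n - 1) / t k) @ \oo --> (n%:R : R).
Proof.
elim: n => [|n IHn].
  by under eq_cvg do rewrite expr0 subrr mul0r; apply: cvg_cst.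
have -> : n.+1%:R = 1 * n%:R + 1 :> R by rewrite mul1r -addn1 natrD.
under eq_cvg => k.
  rewrite (_ : _ / t k = (1 + t k) * (((1 + t k) ^+ n - 1) / t k) + 1).
    over.
  by rewrite exprS; field; rewrite t_neq0.
by apply: cvgD; [apply: cvgM cvg_1Dt IHn | apply: cvg_cst].
Qed.

Lemma diffquot_exprz (m : int) :
  (fun k => ((1 + t k) ^ m - 1) / t k) @ \oo --> (m%:~R : R).
Proof.
case: m => n; first exact: diffquot_exprn.
have cvg_pow : (fun k => (1 + t k) ^+ n.+1) @ \oo --> (1 : R).
  rewrite -[X in _ --> X](addr0 1) -[X in _ --> _ + X](mul0r n.+1%:R).
  under eq_cvg => k.
    rewrite (_ : _ ^+ _ = 1 + t k * (((1 + t k) ^+ n.+1 - 1) / t k)).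
      over.
    by set x := _ ^+ _; field; rewrite t_neq0.
  by apply: cvgD; [apply: cvg_cst | apply: cvgM => //; apply: diffquot_exprn].
have -> : (Negz n)%:~R = - n.+1%:R * 1^-1 :> R by rewrite invr1 mulr1 NegzE mulrNz.
have pow_neq0 k : (1 + t k) ^+ n.+1 != 0.
  by rewrite expf_neq0 // gt_eqF // ltr_wpDr // ltW.
under eq_cvg => k.
  rewrite (_ : _ / t k = - (((1 + t k) ^+ n.+1 - 1) / t k) * ((1 + t k) ^+ n.+1)^-1).
    over.
  rewrite (_ : _ ^ Negz n = ((1 + t k) ^+ n.+1)^-1) //.
  move: (pow_neq0 k); set x := _ ^+ _ => x_neq0.
  by field; rewrite t_neq0 x_neq0.
apply: cvgM; first by apply: cvgN; apply: diffquot_exprn.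
by apply: cvgV => //; apply: oner_neq0.
Qed.

End DifferenceQuotients.

Implicit Types (S : set M) (X : M).

Let cvg_congr (f g : nat -> R) (a b : R) :
  g @ \oo --> a -> f =1 g -> a = b -> f @ \oo --> b.
Proof. by move=> ? /funext -> <-. Qed.

Let cvg_eq (f : nat -> R) (a b : R) : f @ \oo --> a -> f @ \oo --> b -> a = b.
Proof. exact: cvg_unique. Qed.

Lemma lie_unipotent S X : (forall s, 0 < s -> S (1%:M + s *: X)) -> lie S X.
Proof.
move=> SX; exists (fun k => 1%:M + harmonic k *: X), harmonic.
split; first by move=> k; apply/SX/harmonic_gt0.
split; first exact: harmonic_gt0.
split=> [|i j]; first exact: cvg_harmonic.
under eq_cvg => k.
  rewrite (_ : _ / _ = X i j); first over.
  by rewrite !mxE addrAC subrr add0r mulrC mulKf // gt_eqF ?harmonic_gt0.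
exact: cvg_cst.
Qed.

Lemma lie_torus S (p q r : int) :
  (forall a, 0 < a -> S (dd (a ^ p) (a ^ q) (a ^ r))) -> lie S (dd p%:~R q%:~R r%:~R).
Proof.
move=> Sdd; pose x k : R := 1 + harmonic k.
exists (fun k => dd (x k ^ p) (x k ^ q) (x k ^ r)), harmonic.
split; first by move=> k; apply: Sdd; rewrite ltr_wpDr ?ltr01 ?ltW ?harmonic_gt0.
split; first exact: harmonic_gt0.
split=> [|i j]; first exact: cvg_harmonic.
have dq m := diffquot_exprz (@harmonic_gt0 R) cvg_harmonic m.
have cst0 : (fun=> 0) @ \oo --> (0 : R) by apply: cvg_cst.
move: i j => [[|[|[|i]]] Hi] [[|[|[|j]]] Hj] //.
all: try by apply: (cvg_congr cst0) => [k|]; rewrite /dd /mx3 !mxE //= subrr mul0r.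
all: by apply: (cvg_congr (dq _)) => [k|]; rewrite /dd /mx3 !mxE.
Qed.

Lemma lie_entry_eq S X i j i' j' :
  (forall u, S u -> u i j - 1%:M i j = u i' j' - 1%:M i' j') -> lie S X -> X i j = X i' j'.
Proof.
move=> Sij [u [t [Su [_ [_ cvgX]]]]]; apply: cvg_eq (cvgX i j) _.
by under eq_cvg do rewrite Sij //; apply: cvgX.
Qed.

Lemma lie_entry0 S X i j : (forall u, S u -> u i j = 1%:M i j) -> lie S X -> X i j = 0.
Proof.
move=> Sij [u [t [Su [_ [_ cvgX]]]]]; apply: cvg_eq (cvgX i j) _.
by under eq_cvg do rewrite Sij // subrr mul0r; apply: cvg_cst.
Qed.

(* With u_ii = 1 + t x_i, the relation u_00 u_11 u_22 = 1 reads
   x_0 + x_1 + x_2 = - t (x_0 x_1 + x_0 x_2 + x_1 x_2) - t^2 x_0 x_1 x_2. *)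
Lemma lie_diag_trace S X : (forall u, S u -> u 0 0 * u 1 1 * u 2 2 = 1) -> lie S X ->
  X 0 0 + X 1 1 + X 2 2 = 0.
Proof.
move=> Sdet [u [t [Su [t_gt0 [t0 cvgX]]]]].
pose x i k := (u k i i - 1) / t k.
have cvgx i : x i @ \oo --> X i i by apply: (cvg_congr (cvgX i i)) => // k; rewrite /x mxE eqxx.
have key k : x 0 k + x 1 k + x 2 k = - (t k * (x 0 k * x 1 k + x 0 k * x 2 k + x 1 k * x 2 k)
                                       + t k * t k * (x 0 k * x 1 k * x 2 k)).
  have t_neq0 : t k != 0 by rewrite gt_eqF.
  apply/eqP; rewrite -subr_eq0; apply/eqP.
  transitivity ((u k 0 0 * u k 1 1 * u k 2 2 - 1) / t k); first by rewrite /x; field.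
  by rewrite Sdet // subrr mul0r.
apply: (@cvg_eq (fun k => x 0 k + x 1 k + x 2 k)).
  by apply: cvgD; [apply: cvgD|]; apply: cvgx.
have cvgP : (fun k => x 0 k * x 1 k + x 0 k * x 2 k + x 1 k * x 2 k) @ \oo -->
    X 0 0 * X 1 1 + X 0 0 * X 2 2 + X 1 1 * X 2 2.
  by apply: cvgD; [apply: cvgD|]; apply: cvgM; apply: cvgx.
have cvgQ : (fun k => x 0 k * x 1 k * x 2 k) @ \oo --> X 0 0 * X 1 1 * X 2 2.
  by apply: cvgM; [apply: cvgM|]; apply: cvgx.
apply: (cvg_congr (cvgN (cvgD (cvgM t0 cvgP) (cvgM (cvgM t0 t0) cvgQ)))) => //.
by rewrite !mul0r addr0 oppr0.
Qed.

Lemma lie_sub_DN_trace S X : S `<=` DN -> lie S X -> X 0 0 + X 1 1 + X 2 2 = 0.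
Proof.
move=> SDN; apply: lie_diag_trace => u /SDN /DN_mx3 [c1 [c2 [c3 [t [c123 ->]]]]].
by rewrite !mxE.
Qed.

Lemma lie_sub_DN S X : S `<=` DN -> lie S X ->
  X = mx3 (X 0 0) 0 0 0 (X 1 1) (X 1 2) 0 0 (- (X 0 0 + X 1 1)).
Proof.
move=> SDN SX; have trX := lie_sub_DN_trace SDN SX.
have entry0 i j : (forall c1 c2 c3 t : R, mx3 c1 0 0 0 c2 t 0 0 c3 i j = 1%:M i j) -> X i j = 0.
  move=> e; apply: (lie_entry0 _ SX) => u /SDN /DN_mx3 [c1 [c2 [c3 [t [_ ->]]]]].
  exact: e.
rewrite {1}(mx3_eta X) (entry0 0 1) ?(entry0 0 2) ?(entry0 1 0) ?(entry0 2 0) ?(entry0 2 1);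
  try by move=> *; rewrite !mxE.
by congr mx3; lra.
Qed.

Lemma set_dim_span S (B : seq M) : free B -> (forall X, X \in B -> S X) ->
  (forall X, S X -> (X \in <<B>>)%VS) -> set_dim S (size B).
Proof.
move=> fB BS Sspan; split; first by exists B.
move=> s fs sS; rewrite -(eqP fs); apply: leq_trans (dim_span B); apply: dimvS.
by apply/span_subvP => X /sS /Sspan.
Qed.

Lemma delta12E : delta_mx 1 2 = mx3 0 0 0 0 0 1 0 0 0 :> M.
Proof. by mx3_entries. Qed.

Lemma unipotent12 (s : R) : 1%:M + s *: delta_mx 1 2 = nn 0 0 s :> M.
Proof. by mx3_entries; rewrite ?(mulr0, mulr1, addr0, add0r). Qed.

Lemma delta12_neq0 : delta_mx 1 2 != 0 :> M.
Proof.
by apply/eqP; rewrite delta12E mx3_0 => /mx3_inj [_ [_ [_ [_ [_ [/eqP]]]]]]; rewrite oner_eq0.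
Qed.

Lemma dd_notin_delta12 (a b c : R) : a != 0 -> forall k, dd a b c != k *: delta_mx 1 2.
Proof.
move=> a0 k; apply/eqP; rewrite delta12E scale_mx3 => /mx3_inj [/eqP].
by rewrite mulr0 (negbTE a0).
Qed.

Lemma free_dd_basis : free [:: dd 1 (-1) 0; dd 0 1 (-1) : M].
Proof.
apply: free_seq2.
  by apply/eqP; rewrite mx3_0 => /mx3_inj [_ [_ [_ [_ [/eqP]]]]]; rewrite oner_eq0.
by move=> k; apply/eqP; rewrite scale_mx3 => /mx3_inj [/eqP]; rewrite mulr0 oner_eq0.
Qed.

Lemma dim_lie_z1z1n100 :
  set_dim (lie [set g : M | exists a : R, a != 0 /\ g = dd a a (a ^- 2)]) 1.
Proof.
set S := [set g | _]; have SDN : S `<=` DN by move=> _ [a [a0 ->]]; apply: DN_coords; field.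
apply: (set_dim_span (B := [:: dd 1 1 (-2)])).
- by rewrite seq1_free; apply/eqP; rewrite mx3_0 => /mx3_inj [] /eqP; rewrite oner_eq0.
- move=> X; rewrite inE => /eqP ->; change (lie S (dd 1%:~R 1%:~R (-2)%:~R)).
  by apply: lie_torus => a a0; exists a; rewrite gt_eqF.
move=> X SX; rewrite (lie_sub_DN SDN SX).
have -> : X 0 0 = X 1 1 by apply: (lie_entry_eq _ SX) => _ [a [_ ->]]; rewrite !mxE.
have -> : X 1 2 = 0 by apply: (lie_entry0 _ SX) => _ [a [_ ->]]; rewrite !mxE.
rewrite (_ : mx3 _ _ _ _ _ _ _ _ _ = X 1 1 *: dd 1 1 (-2)) ?memv_span1 //.
by rewrite scale_mx3; congr mx3; ring.
Qed.

Lemma dim_lie_z1z1n010 :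
  set_dim (lie [set g : M | exists a x : R, a != 0 /\ g = mx3 a 0 0 0 (a ^- 2) x 0 0 a]) 2.
Proof.
set S := [set g | _]; have SDN : S `<=` DN by move=> _ [a [x [a0 ->]]]; apply: DN_coords; field.
apply: (set_dim_span (B := [:: dd 1 (-2) 1; delta_mx 1 2])).
- by apply: free_seq2; [apply: delta12_neq0 | apply/dd_notin_delta12/oner_neq0].
- move=> X; rewrite !inE => /orP [] /eqP ->.
    change (lie S (dd 1%:~R (-2)%:~R 1%:~R)); apply: lie_torus => a a0.
    by exists a, 0; rewrite gt_eqF.
  apply: lie_unipotent => s _; rewrite unipotent12.
  by exists 1, s; rewrite expr1n invr1 oner_neq0.
move=> X SX; rewrite (lie_sub_DN SDN SX).
have X02 : X 0 0 = X 2 2 by apply: (lie_entry_eq _ SX) => _ [a [x [_ ->]]]; rewrite !mxE.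
have trX := lie_sub_DN_trace SDN SX.
rewrite (_ : mx3 _ _ _ _ _ _ _ _ _ = X 0 0 *: dd 1 (-2) 1 + X 1 2 *: delta_mx 1 2).
  exact: memv_span2.
by rewrite delta12E !scale_mx3 add_mx3; congr mx3; lra.
Qed.

Lemma dim_lie_z2n010 :
  set_dim (lie [set g : M | exists a : R, a != 0 /\ g = dd a (a ^- 2) a]) 1.
Proof.
set S := [set g | _]; have SDN : S `<=` DN by move=> _ [a [a0 ->]]; apply: DN_coords; field.
apply: (set_dim_span (B := [:: dd 1 (-2) 1])).
- by rewrite seq1_free; apply/eqP; rewrite mx3_0 => /mx3_inj [] /eqP; rewrite oner_eq0.
- move=> X; rewrite inE => /eqP ->; change (lie S (dd 1%:~R (-2)%:~R 1%:~R)).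
  by apply: lie_torus => a a0; exists a; rewrite gt_eqF.
move=> X SX; rewrite (lie_sub_DN SDN SX).
have X02 : X 0 0 = X 2 2 by apply: (lie_entry_eq _ SX) => _ [a [_ ->]]; rewrite !mxE.
have -> : X 1 2 = 0 by apply: (lie_entry0 _ SX) => _ [a [_ ->]]; rewrite !mxE.
have trX := lie_sub_DN_trace SDN SX.
rewrite (_ : mx3 _ _ _ _ _ _ _ _ _ = X 0 0 *: dd 1 (-2) 1) ?memv_span1 //.
by rewrite scale_mx3; congr mx3; lra.
Qed.

Lemma dim_lie_s1n100 :
  set_dim (lie [set g : M | exists a x : R, a != 0 /\ g = mx3 a 0 0 0 a x 0 0 (a ^- 2)]) 2.
Proof.
set S := [set g | _]; have SDN : S `<=` DN by move=> _ [a [x [a0 ->]]]; apply: DN_coords; field.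
apply: (set_dim_span (B := [:: dd 1 1 (-2); delta_mx 1 2])).
- by apply: free_seq2; [apply: delta12_neq0 | apply/dd_notin_delta12/oner_neq0].
- move=> X; rewrite !inE => /orP [] /eqP ->.
    change (lie S (dd 1%:~R 1%:~R (-2)%:~R)); apply: lie_torus => a a0.
    by exists a, 0; rewrite gt_eqF.
  apply: lie_unipotent => s _; rewrite unipotent12.
  by exists 1, s; rewrite expr1n invr1 oner_neq0.
move=> X SX; rewrite (lie_sub_DN SDN SX).
have -> : X 0 0 = X 1 1 by apply: (lie_entry_eq _ SX) => _ [a [x [_ ->]]]; rewrite !mxE.
rewrite (_ : mx3 _ _ _ _ _ _ _ _ _ = X 1 1 *: dd 1 1 (-2) + X 1 2 *: delta_mx 1 2).
  exact: memv_span2.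
by rewrite delta12E !scale_mx3 add_mx3; congr mx3; ring.
Qed.

Lemma dim_lie_DN : set_dim (lie DN) 3.
Proof.
apply: (set_dim_span (B := [:: delta_mx 1 2; dd 1 (-1) 0; dd 0 1 (-1)])).
- apply: free_seq3; first exact: free_dd_basis.
  move=> k l; apply/eqP; rewrite delta12E !scale_mx3 add_mx3.
  by move=> /mx3_inj [_ [_ [_ [_ [_ [/eqP]]]]]]; rewrite !mulr0 addr0 oner_eq0.
- move=> X; rewrite !inE => /or3P [] /eqP ->.
  + apply: lie_unipotent => s _; rewrite unipotent12.
    by apply: DN_coords; rewrite !mulr1.
  + change (lie DN (dd 1%:~R (-1)%:~R 0%:~R)); apply: lie_torus => a a0.
    by apply: DN_coords; rewrite expr1z mulfV ?gt_eqF // mulr1.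
  + change (lie DN (dd 0%:~R 1%:~R (-1)%:~R)); apply: lie_torus => a a0.
    by apply: DN_coords; rewrite expr1z mul1r mulfV ?gt_eqF.
move=> X SX; rewrite (lie_sub_DN (@subset_refl _ DN) SX).
rewrite (_ : mx3 _ _ _ _ _ _ _ _ _ =
  X 1 2 *: delta_mx 1 2 + X 0 0 *: dd 1 (-1) 0 + (X 0 0 + X 1 1) *: dd 0 1 (-1)).
  exact: memv_span3.
by rewrite delta12E !scale_mx3 !add_mx3; congr mx3; ring.
Qed.

Lemma dim_lie_D : set_dim (lie (inD (R := R))) 2.
Proof.
apply: (set_dim_span (B := [:: dd 1 (-1) 0; dd 0 1 (-1)])).
- exact: free_dd_basis.
- move=> X; rewrite !inE => /orP [] /eqP ->.
    change (lie (inD (R := R)) (dd 1%:~R (-1)%:~R 0%:~R)); apply: lie_torus => a a0.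
    by apply/inD_coords; exists a, a^-1, 1; rewrite mulfV ?gt_eqF // mulr1.
  change (lie (inD (R := R)) (dd 0%:~R 1%:~R (-1)%:~R)); apply: lie_torus => a a0.
  by apply/inD_coords; exists 1, a, a^-1; rewrite mul1r mulfV ?gt_eqF.
move=> X SX; rewrite (lie_sub_DN inD_sub_DN SX).
have -> : X 1 2 = 0.
  by apply: (lie_entry0 _ SX) => _ /inD_coords [c1 [c2 [c3 [_ ->]]]]; rewrite !mxE.
rewrite (_ : mx3 _ _ _ _ _ _ _ _ _ = X 0 0 *: dd 1 (-1) 0 + (X 0 0 + X 1 1) *: dd 0 1 (-1)).
  exact: memv_span2.
by rewrite !scale_mx3 add_mx3; congr mx3; ring.
Qed.

Lemma orbit_dim_of_stab (x : triple R) S k d :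
  stab x = S -> set_dim (lie S) k -> (k + d = 8)%N -> orbit_dim x d.
Proof. by move=> xS Sk kd; exists k; rewrite xS addnC. Qed.

Lemma orbit_dim_z1z1n100 : orbit_dim (pt z1 (z1 *m nn 1 0 0 : M)) 7.
Proof. exact: orbit_dim_of_stab stab_z1_z1n100 dim_lie_z1z1n100 erefl. Qed.

Lemma orbit_dim_z1z1n010 : orbit_dim (pt z1 (z1 *m nn 0 1 0 : M)) 6.
Proof. exact: orbit_dim_of_stab stab_z1_z1n010 dim_lie_z1z1n010 erefl. Qed.

Lemma orbit_dim_z1z1n000 : orbit_dim (pt z1 (z1 *m nn 0 0 0 : M)) 5.
Proof. exact: orbit_dim_of_stab stab_z1_z1n000 dim_lie_DN erefl. Qed.

Lemma orbit_dim_z2n010 : orbit_dim (pt z1 (z2 *m nn 0 1 0 : M)) 7.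
Proof. exact: orbit_dim_of_stab stab_z1_z2n010 dim_lie_z2n010 erefl. Qed.

Lemma orbit_dim_z2n000 : orbit_dim (pt z1 (z2 *m nn 0 0 0 : M)) 6.
Proof. exact: orbit_dim_of_stab stab_z1_z2n000 dim_lie_D erefl. Qed.

Lemma orbit_dim_s1n100 : orbit_dim (pt z1 (s1 *m nn 1 0 0 : M)) 6.
Proof. exact: orbit_dim_of_stab stab_z1_s1n100 dim_lie_s1n100 erefl. Qed.

Lemma orbit_dim_s1n000 : orbit_dim (pt z1 (s1 *m nn 0 0 0 : M)) 5.
Proof. exact: orbit_dim_of_stab stab_z1_s1n000 dim_lie_DN erefl. Qed.

Lemma orbit_dim_s2 : orbit_dim (pt z1 (s2 : M)) 6.
Proof. exact: orbit_dim_of_stab stab_z1_s2 dim_lie_D erefl. Qed.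

Lemma orbit_dim_one : orbit_dim (pt z1 (1%:M : M)) 5.
Proof. exact: orbit_dim_of_stab stab_z1_1 dim_lie_DN erefl. Qed.

End SL3.

Theorem mainTheorem9 (R : realType) :
  let O (v w n : 'M[R]_3) := Gorbit (pt v (w *m n)) in
  let St (v w n : 'M[R]_3) := stab (pt v (w *m n)) in
  let Dim (v w n : 'M[R]_3) (d : nat) := orbit_dim (pt v (w *m n)) d in
  let DN := [set g : 'M[R]_3 | exists d x, inD d /\ g = d *m nn 0 0 x] in
  (* (a) *)
  (cell z1 z1 = O z1 z1 (nn 1 0 0) `|` O z1 z1 (nn 0 1 0) `|` O z1 z1 (nn 0 0 0)
   /\ O z1 z1 (nn 1 0 0) `&` O z1 z1 (nn 0 1 0) = set0
   /\ O z1 z1 (nn 1 0 0) `&` O z1 z1 (nn 0 0 0) = set0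
   /\ O z1 z1 (nn 0 1 0) `&` O z1 z1 (nn 0 0 0) = set0
   /\ Dim z1 z1 (nn 1 0 0) 7%N
   /\ St z1 z1 (nn 1 0 0) = [set g | exists a : R, a != 0 /\ g = dd a a (a ^- 2)]
   /\ Dim z1 z1 (nn 0 1 0) 6%N
   /\ St z1 z1 (nn 0 1 0) =
        [set g | exists a x : R, a != 0 /\ g = mx3 a 0 0 0 (a ^- 2) x 0 0 a]
   /\ Dim z1 z1 (nn 0 0 0) 5%N
   /\ St z1 z1 (nn 0 0 0) = DN) /\
  (* (b) *)
  (cell z1 z2 = O z1 z2 (nn 0 1 0) `|` O z1 z2 (nn 0 0 0)
   /\ O z1 z2 (nn 0 1 0) `&` O z1 z2 (nn 0 0 0) = set0
   /\ Dim z1 z2 (nn 0 1 0) 7%N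
   /\ St z1 z2 (nn 0 1 0) = [set g | exists a : R, a != 0 /\ g = dd a (a ^- 2) a]
   /\ Dim z1 z2 (nn 0 0 0) 6%N
   /\ St z1 z2 (nn 0 0 0) = inD (R := R)) /\
  (* (c) *)
  (cell z1 s1 = O z1 s1 (nn 1 0 0) `|` O z1 s1 (nn 0 0 0)
   /\ O z1 s1 (nn 1 0 0) `&` O z1 s1 (nn 0 0 0) = set0
   /\ Dim z1 s1 (nn 1 0 0) 6%N
   /\ St z1 s1 (nn 1 0 0) =
        [set g | exists a x : R, a != 0 /\ g = mx3 a 0 0 0 a x 0 0 (a ^- 2)]
   /\ Dim z1 s1 (nn 0 0 0) 5%N
   /\ St z1 s1 (nn 0 0 0) = DN) /\
  (* (d) *)
  (cell (@z1 R) s2 = Gorbit (pt (@z1 R) s2)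
   /\ orbit_dim (pt (@z1 R) s2) 6%N
   /\ stab (pt (@z1 R) s2) = inD (R := R)) /\
  (* (e) *)
  (cell (@z1 R) 1%:M = Gorbit (pt (@z1 R) 1%:M)
   /\ orbit_dim (pt (@z1 R) 1%:M) 5%N
   /\ stab (pt (@z1 R) 1%:M) = DN).
Proof.
move=> O St Dim DN; rewrite /O /St /Dim /DN /=; split_and.
all: [> exact: cell_z1_z1 | exact: z1_orbits_disjoint12 | exact: z1_orbits_disjoint13
  | exact: z1_orbits_disjoint23
  | exact: orbit_dim_z1z1n100 | exact: stab_z1_z1n100
  | exact: orbit_dim_z1z1n010 | exact: stab_z1_z1n010
  | exact: orbit_dim_z1z1n000 | exact: stab_z1_z1n000
  | exact: cell_z1_z2 | exact: z2_orbits_disjoint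
  | exact: orbit_dim_z2n010 | exact: stab_z1_z2n010
  | exact: orbit_dim_z2n000 | exact: stab_z1_z2n000
  | exact: cell_z1_s1 | exact: s1_orbits_disjoint
  | exact: orbit_dim_s1n100 | exact: stab_z1_s1n100
  | exact: orbit_dim_s1n000 | exact: stab_z1_s1n000
  | exact: cell_z1_s2 | exact: orbit_dim_s2
  | exact: stab_z1_s2
  | exact: cell_z1_1 | exact: orbit_dim_one | exact: stab_z1_1 ].
Qed.
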